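(* $\mathrm{Cond}(\mathrm{Rel}^+)\cong\mathrm{Rel}$. Explicitly, a morphism $(K,R,k_0):X\leadsto Y$ with $R\subseteq X\times Y\times K$ left-total in $X$ corresponds to the relation $R'=\{(x,y):(x,y,k_0)\in R\}\subseteq X\times Y$, and a relation $R'\subseteq X\times Y$ corresponds to $(\{0,1\},R'',1)$ with $(x,y,b)\in R''$ iff ($(x,y)\in R'\Leftrightarrow b=1$); these assignments are mutually inverse on $\approx$-classes.
   Context: $\mathrm{Rel}$: the CD category of sets and arbitrary relations $R\subseteq X\times Y$ (Kleisli category of the powerset monad), with relational composition, cartesian product as tensor, copy the diagonal relation and delete the total relation to a one-point set. $\mathrm{Rel}^+$: its Markov subcategory of left-total relations ($\forall x\,\exists y,\ (x,y)\in R$). Deterministic states $I\to K$ of $\mathrm{Rel}^+$ are single points $k_0\in K$. $\mathrm{Rel}^+$ has conditionals and precise supports; for a state (nonempty subset) $M\subseteq X$ and point $x$, $x\ll M$ iff $x\in M$. $\mathrm{Obs}(\mathcal C)$ for a Markov category $\mathcal C$: same objects; morphisms $X\leadsto Y$ are triples $(K,f,o)$ with $f:X\to Y\otimes K$ and $o:I\to K$ deterministic; composition $(K',f',o')\bullet(K,f,o)=(K'\otimes K,(f'\otimes\mathrm{id}_K)f,o'\otimes o)$; tensor of $(K,f,o):X\leadsto Y$, $(K',f',o'):X'\leadsto Y'$ is $(K'\otimes K,(\mathrm{id}_{Y'}\otimes\mathrm{swap}_{K',Y}\otimes\mathrm{id}_K)(f'\otimes f),o'\otimes o)$. Here $f_X$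 denotes the marginal, and for a state $\psi:I\to X\otimes K$, $\psi|_K:K\to X$ is a conditional, i.e. $\psi=\mathrm{swap}\,(\mathrm{id}_K\otimes\psi|_K)\mathrm{copy}_K\,\psi_K$. For states, $(K,\psi,o)\sim(K',\psi',o')$ iff either ($o\ll\psi_K$, $o'\ll\psi'_{K'}$ and $\psi|_Ko=\psi'|_{K'}o'$) or ($o\not\ll\psi_K$ and $o'\not\ll\psi'_{K'}$). For $F,G:X\leadsto Y$, $F\approx G$ iff for every $A$ and every state $\Psi:I\leadsto A\otimes X$, $(\mathrm{Id}_A\otimes F)\bullet\Psi\sim(\mathrm{Id}_A\otimes G)\bullet\Psi$. $\mathrm{Cond}(\mathcal C)=\mathrm{Obs}(\mathcal C)/{\approx}$, a CD category. *)

From Stdlib Require Import Classical.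

Definition rel (X Y : Type) := X -> Y -> Prop.

Definition rel_eq {X Y : Type} (R S : rel X Y) : Prop :=
  forall x y, R x y <-> S x y.

Definition rel_comp {X Y Z : Type} (g : rel Y Z) (f : rel X Y) : rel X Z :=
  fun x z => exists y, f x y /\ g y z.

Definition rel_tensor {X Y X' Y' : Type} (f : rel X Y) (f' : rel X' Y')
  : rel (X * X') (Y * Y') :=
  fun p q => f (fst p) (fst q) /\ f' (snd p) (snd q).

Definition left_total {X Y : Type} (f : rel X Y) : Prop :=
  forall x, exists y, f x y.

(* A morphism X ~> Y is (K, f, o) with f : X -> Y ⊗ K in Rel^+ (left total)
   and o : I -> K deterministic, i.e. a point o of K. *)
Record obs (X Y : Type) := Obs {
  hid : Type;
  orel : rel X (Y * hid);
  orel_lt : left_total orel;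
  opt : hid }.
Arguments hid {X Y}.
Arguments orel {X Y}.
Arguments orel_lt {X Y}.
Arguments opt {X Y}.

(* embedding of Rel^+ into Obs: f |-> (I, f, id_I) *)
Definition obs_of_rel_rel {X Y : Type} (f : rel X Y) : rel X (Y * unit) :=
  fun x p => f x (fst p).

Lemma obs_of_lt {X Y : Type} (f : rel X Y) (Hf : left_total f) :
  left_total (obs_of_rel_rel f).
Proof. intros x; destruct (Hf x) as [y Hy]; exists (y, tt); exact Hy. Qed.

Definition obs_of {X Y : Type} (f : rel X Y) (Hf : left_total f) : obs X Y :=
  Obs X Y unit (obs_of_rel_rel f) (obs_of_lt f Hf) tt.

Lemma eq_lt (X : Type) : left_total (fun x y : X => x = y).
Proof. intros x; exists x; reflexivity. Qed.

Definition obs_id (X : Type) : obs X X := obs_of (fun x y : X => x = y) (eq_lt X).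

(* composition (K',f',o') • (K,f,o) = (K' ⊗ K, (f' ⊗ id_K) f, o' ⊗ o) *)
Definition obs_comp_rel {X Y Z : Type} (G : obs Y Z) (F : obs X Y)
  : rel X (Z * (hid G * hid F)) :=
  fun x q => exists y, orel F x (y, snd (snd q)) /\ orel G y (fst q, fst (snd q)).

Lemma obs_comp_lt {X Y Z : Type} (G : obs Y Z) (F : obs X Y) :
  left_total (obs_comp_rel G F).
Proof.
  intros x. destruct (orel_lt F x) as [[y k] Hyk].
  destruct (orel_lt G y) as [[z k'] Hzk].
  exists (z, (k', k)). exists y. split; assumption.
Qed.

Definition obs_comp {X Y Z : Type} (G : obs Y Z) (F : obs X Y) : obs X Z :=
  Obs X Z (hid G * hid F) (obs_comp_rel G F) (obs_comp_lt G F) (opt G, opt F).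

(* tensor: for F : X ~> Y and F' : X' ~> Y', F ⊗ F' : X ⊗ X' ~> Y ⊗ Y'
   with hidden object K_F ⊗ K_F' and relation (id ⊗ swap ⊗ id)(f ⊗ f') *)
Definition obs_tensor_rel {X Y X' Y' : Type} (F : obs X Y) (F' : obs X' Y')
  : rel (X * X') ((Y * Y') * (hid F * hid F')) :=
  fun p q => orel F (fst p) (fst (fst q), fst (snd q))
          /\ orel F' (snd p) (snd (fst q), snd (snd q)).

Lemma obs_tensor_lt {X Y X' Y' : Type} (F : obs X Y) (F' : obs X' Y') :
  left_total (obs_tensor_rel F F').
Proof.
  intros [x x']. destruct (orel_lt F x) as [[y k] H1].
  destruct (orel_lt F' x') as [[y' k'] H2].
  exists ((y, y'), (k, k')). split; assumption.
Qed.

Definition obs_tensor {X Y X' Y' : Type} (F : obs X Y) (F' : obs X' Y')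
  : obs (X * X') (Y * Y') :=
  Obs (X * X') (Y * Y') (hid F * hid F') (obs_tensor_rel F F')
      (obs_tensor_lt F F') (opt F, opt F').

(* a state I ~> Z is an obs unit Z; its marginal on K is the set psi_K *)
Definition marg_K {Z : Type} (S : obs unit Z) : hid S -> Prop :=
  fun k => exists z, orel S tt (z, k).

(* c : K -> Z (in Rel^+) is a conditional psi|_K :
   psi = swap (id_K ⊗ c) copy_K psi_K *)
Definition is_conditional {Z : Type} (S : obs unit Z) (c : rel (hid S) Z) : Prop :=
  left_total c /\
  forall z k, orel S tt (z, k) <-> (marg_K S k /\ c k z).

(* x ≪ M iff x ∈ M in Rel^+ *)
Definition state_sim {Z : Type} (S T : obs unit Z) : Prop :=
  (marg_K S (opt S) /\ marg_K T (opt T) /\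
     exists cS cT, is_conditional S cS /\ is_conditional T cT /\
       (forall z, cS (opt S) z <-> cT (opt T) z))
  \/ (~ marg_K S (opt S) /\ ~ marg_K T (opt T)).

Definition obs_approx {X Y : Type} (F G : obs X Y) : Prop :=
  forall (A : Type) (Psi : obs unit (A * X)),
    state_sim (obs_comp (obs_tensor (obs_id A) F) Psi)
              (obs_comp (obs_tensor (obs_id A) G) Psi).

Definition to_rel {X Y : Type} (F : obs X Y) : rel X Y :=
  fun x y => orel F x (y, opt F).

(* R' |-> ({0,1}, R'', 1) with (x,y,b) ∈ R'' iff ((x,y) ∈ R' <-> b = 1).
   R'' is left total only when Y is nonempty, hence the point y0. *)
Definition of_rel_rel {X Y : Type} (R : rel X Y) : rel X (Y * bool) :=
  fun x q => (R x (fst q) <-> snd q = true).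

Lemma of_rel_lt {X Y : Type} (y0 : Y) (R : rel X Y) : left_total (of_rel_rel R).
Proof.
  intros x. destruct (classic (R x y0)) as [H|H].
  - exists (y0, true). unfold of_rel_rel; simpl; tauto.
  - exists (y0, false). unfold of_rel_rel; simpl; split; [tauto|discriminate].
Qed.

Definition of_rel {X Y : Type} (y0 : Y) (R : rel X Y) : obs X Y :=
  Obs X Y bool (of_rel_rel R) (of_rel_lt y0 R) true.

(* In Rel^+ a state psi with hidden part K and observed point o is ∼-determined
   by its fibre {z | (z, o) ∈ psi}: when o lies in the support, the fibre itself
   (padded arbitrarily off the support) is a conditional evaluated at o, and when
   it does not, the fibre is empty.  The fibre of (Id_A ⊗ F) • Psi at (a, y) is
   the composite of the fibre of Psi with to_rel F, so F ≈ G reduces to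
   to_rel F = to_rel G, the converse being tested on point states. *)
From Stdlib Require Import Classical.

Definition state_fiber {Z : Type} (S : obs unit Z) : Z -> Prop :=
  fun z => orel S tt (z, opt S).

Lemma conditional_exists {Z : Type} (S : obs unit Z) (k0 : hid S) :
  marg_K S k0 ->
  exists c, is_conditional S c /\
    forall k z, marg_K S k -> (c k z <-> orel S tt (z, k)).
Proof.
  intros [z1 Hz1].
  exists (fun k z => orel S tt (z, k) \/ (~ marg_K S k /\ z = z1)).
  split; [split|].
  - intros k. destruct (classic (marg_K S k)) as [[z Hz]|Hn].
    + exists z; left; exact Hz.
    + exists z1; right; tauto.
  - intros z k; split.
    + intros H; split; [exists z; exact H | left; exact H].
    + intros [Hm [H|[Hn _]]]; [exact H | contradiction].
  - intros k z Hm; split.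
    + intros [H|[Hn _]]; [exact H | contradiction].
    + intros H; left; exact H.
Qed.

Lemma state_sim_iff_fiber {Z : Type} (S T : obs unit Z) :
  state_sim S T <-> forall z, state_fiber S z <-> state_fiber T z.
Proof.
  unfold state_fiber. split.
  - intros [[HmS [HmT [cS [cT [[_ HS] [[_ HT] Hc]]]]]] | [HnS HnT]] z.
    + rewrite HS, HT. specialize (Hc z). tauto.
    + split; intros H; [elim HnS | elim HnT]; exists z; exact H.
  - intros Hfib. destruct (classic (marg_K S (opt S))) as [HmS|HnS].
    + assert (HmT : marg_K T (opt T)).
      { destruct HmS as [z Hz]; exists z; apply Hfib; exact Hz. }
      destruct (conditional_exists S _ HmS) as [cS [HcS ES]].
      destruct (conditional_exists T _ HmT) as [cT [HcT ET]].
      left; split; [exact HmS | split; [exact HmT |]].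
      exists cS, cT; split; [exact HcS | split; [exact HcT |]].
      intros z. rewrite (ES _ _ HmS), (ET _ _ HmT). apply Hfib.
    + right; split; [exact HnS|].
      intros [z Hz]; apply HnS; exists z; apply Hfib; exact Hz.
Qed.

Lemma state_fiber_whisker {A X Y : Type} (F : obs X Y) (Psi : obs unit (A * X))
    (a : A) (y : Y) :
  state_fiber (obs_comp (obs_tensor (obs_id A) F) Psi) (a, y) <->
  exists x, state_fiber Psi (a, x) /\ to_rel F x y.
Proof.
  unfold state_fiber, to_rel; simpl.
  unfold obs_comp_rel, obs_tensor_rel, obs_of_rel_rel; simpl.
  split.
  - intros [[a' x] [HPsi [Ha HF]]]. change (a' = a) in Ha; subst a'.
    exists x; split; assumption.
  - intros [x [HPsi HF]]. exists (a, x); split; [exact HPsi | split; [reflexivity | exact HF]].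
Qed.

Definition point_state {X : Type} (x0 : X) : obs unit (unit * X) :=
  Obs unit (unit * X) unit (fun _ q => snd (fst q) = x0)
      (fun _ => ex_intro _ ((tt, x0), tt) eq_refl) tt.

Lemma obs_approx_iff_to_rel (X Y : Type) (F G : obs X Y) :
  obs_approx F G <-> rel_eq (to_rel F) (to_rel G).
Proof.
  split.
  - intros Happrox x y.
    pose proof (proj1 (state_sim_iff_fiber _ _) (Happrox unit (point_state x)) (tt, y))
      as Hfib.
    rewrite !state_fiber_whisker in Hfib.
    split; intros H.
    + destruct (proj1 Hfib (ex_intro _ x (conj eq_refl H))) as [x' [Hx' HG]].
      simpl in Hx'; subst x'; exact HG.
    + destruct (proj2 Hfib (ex_intro _ x (conj eq_refl H))) as [x' [Hx' HF]].
      simpl in Hx'; subst x'; exact HF.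
  - intros Hrel A Psi. apply state_sim_iff_fiber. intros [a y].
    rewrite !state_fiber_whisker.
    split; intros [x [HPsi H]]; exists x; split; try assumption; apply Hrel; exact H.
Qed.

Lemma to_rel_of_rel (X Y : Type) (y0 : Y) (R : rel X Y) :
  rel_eq (to_rel (of_rel y0 R)) R.
Proof. intros x y; unfold to_rel, of_rel, of_rel_rel; simpl; tauto. Qed.

Lemma of_rel_to_rel_approx (X Y : Type) (y0 : Y) (F : obs X Y) :
  obs_approx (of_rel y0 (to_rel F)) F.
Proof. apply obs_approx_iff_to_rel, to_rel_of_rel. Qed.

Lemma to_rel_obs_comp (X Y Z : Type) (F : obs X Y) (G : obs Y Z) :
  rel_eq (to_rel (obs_comp G F)) (rel_comp (to_rel G) (to_rel F)).
Proof.
  intros x z; unfold to_rel, rel_comp, obs_comp_rel; simpl.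
  split; intros [y [H1 H2]]; exists y; split; assumption.
Qed.

Lemma to_rel_obs_tensor (X Y X' Y' : Type) (F : obs X Y) (F' : obs X' Y') :
  rel_eq (to_rel (obs_tensor F F')) (rel_tensor (to_rel F) (to_rel F')).
Proof. intros x y; unfold to_rel, rel_tensor, obs_tensor, obs_tensor_rel; simpl; tauto. Qed.

Lemma to_rel_obs_of (X Y : Type) (f : rel X Y) (Hf : left_total f) :
  rel_eq (to_rel (obs_of f Hf)) f.
Proof. intros x y; unfold to_rel, obs_of, obs_of_rel_rel; simpl; tauto. Qed.

Theorem proposition6p8 :
  (forall (X Y : Type) (F G : obs X Y),
      obs_approx F G <-> rel_eq (to_rel F) (to_rel G)) /\
  (forall (X Y : Type) (y0 : Y) (R : rel X Y), rel_eq (to_rel (of_rel y0 R)) R) /\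
  (forall (X Y : Type) (y0 : Y) (F : obs X Y), obs_approx (of_rel y0 (to_rel F)) F) /\
  (forall (X Y Z : Type) (F : obs X Y) (G : obs Y Z),
      rel_eq (to_rel (obs_comp G F)) (rel_comp (to_rel G) (to_rel F))) /\
  (forall (X Y X' Y' : Type) (F : obs X Y) (F' : obs X' Y'),
      rel_eq (to_rel (obs_tensor F F')) (rel_tensor (to_rel F) (to_rel F'))) /\
  (forall (X Y : Type) (f : rel X Y) (Hf : left_total f),
      rel_eq (to_rel (obs_of f Hf)) f).
Proof.
  exact (conj obs_approx_iff_to_rel
         (conj to_rel_of_rel
         (conj of_rel_to_rel_approx
         (conj to_rel_obs_comp
         (conj to_rel_obs_tensor to_rel_obs_of))))).
Qed.
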